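(* Let \[ r_2 = \frac{1}{4} \left(1 + \sqrt{33} - \sqrt{2 \left(9 + \sqrt{33} \right)} \right). \] Then \[ \operatorname{Li}_{2}(r_2^6) - 3 \operatorname{Li}_{2}(r_2^4) - 8 \operatorname{Li}_{2}(r_2^3) + 21 \operatorname{Li}_{2}(r_2^2) + 24 \operatorname{Li}_{2}(r_2) - 11 \zeta(2) = -6 \log^{2}(r_2). \]
   Context: $\operatorname{Li}_2(x)=\sum_{n\ge1}x^n/n^2$ is the dilogarithm and $\zeta(2)=\pi^2/6$. *)

From Stdlib Require Import Reals.
From Coquelicot Require Import Coquelicot.
Open Scope R_scope.

(* Dilogarithm Li_2(x) = sum_{n>=1} x^n / n^2 (Coquelicot's total Series;
   reindexed from n = 0 as x^(n+1)/(n+1)^2). Used only for |x| <= 1. *)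
Definition Li2 (x : R) : R :=
  Series (fun n : nat => x ^ (S n) / (INR (S n)) ^ 2).

Definition zeta2 : R := PI ^ 2 / 6.

Definition r2 : R :=
  / 4 * (1 + sqrt 33 - sqrt (2 * (9 + sqrt 33))).

From Stdlib Require Import Reals Lra Lia QArith Qreals List.
From Coquelicot Require Import Coquelicot.
Import ListNotations.
Open Scope R_scope.

(* Write r = r2 and L(x) = Li2(x) + log(x) log(1 - x) / 2 for the Rogers dilogarithm.
   The statement splits into the ladder
   24 L(r) + 21 L(r^2) - 8 L(r^3) - 3 L(r^4) + L(r^6) = 11 zeta(2)
   and an identity between the logarithmic terms, which follows from
   (1 + r + r^2)(1 + r^2) = 2 (1 - r^2)^2 and (1 - r + r^2)(1 + r^2) = 8 r^2, both
   consequences of r^4 - r^3 - 6 r^2 - r + 1 = 0.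
   On (0, 1), L satisfies Abel's five-term relation and Euler's reflection
   L(x) + L(1 - x) = L(1) = zeta(2): in both cases the defect has zero derivative and
   tends to 0 at 0+.  The ladder is a rational linear combination of 54 five-term
   relations and 4 reflections between elements of Q(r) lying in (0, 1), which are
   checked by exact arithmetic in Q[X]/(X^4 - X^3 - 6 X^2 - X + 1) and rational bounds
   on r. *)

(** * Limits from the right *)

Lemma filterlim_Rplus {T} {F : (T -> Prop) -> Prop} {FF : Filter F} (f g : T -> R) a b :
  filterlim f F (locally a) -> filterlim g F (locally b) ->
  filterlim (fun t => f t + g t) F (locally (a + b)).
Proof. intros Hf Hg. exact (filterlim_comp_2 f g Rplus Hf Hg (filterlim_plus a b)). Qed.

Lemma filterlim_Rminus {T} {F : (T -> Prop) -> Prop} {FF : Filter F} (f g : T -> R) a b :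
  filterlim f F (locally a) -> filterlim g F (locally b) ->
  filterlim (fun t => f t - g t) F (locally (a - b)).
Proof.
  intros Hf Hg. apply filterlim_Rplus; [exact Hf |].
  eapply filterlim_comp; [exact Hg | apply (@filterlim_opp _ R_NormedModule)].
Qed.

Lemma filterlim_Rmult_l {T} {F : (T -> Prop) -> Prop} {FF : Filter F} (f : T -> R) k a :
  filterlim f F (locally a) -> filterlim (fun t => k * f t) F (locally (k * a)).
Proof.
  intros Hf. eapply filterlim_comp; [exact Hf | apply (@filterlim_scal_r _ R_NormedModule)].
Qed.

Lemma filterlim_at_right_continuous (f : R -> R) x :
  continuous f x -> filterlim f (at_right x) (locally (f x)).
Proof.
  intros Hf. exact (filterlim_filter_le_1 _ (filter_le_within (fun u => x < u)) Hf).
Qed.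

Lemma at_right_of_forall (P : R -> Prop) x d :
  0 < d -> (forall t, x < t < x + d -> P t) -> at_right x P.
Proof.
  intros Hd HP. exists (mkposreal d Hd). intros t Ht Hxt. apply HP.
  apply Rabs_lt_between' in Ht. simpl in Ht. lra.
Qed.

Lemma eq_of_is_derive_0 (f : R -> R) a b x y :
  (forall t, a < t < b -> is_derive f t 0) -> a < x < b -> a < y < b -> f x = f y.
Proof.
  intros Hd Hx Hy.
  assert (Hin : forall t, Rmin x y <= t <= Rmax x y -> a < t < b).
  { intros t Ht. unfold Rmin, Rmax in Ht. destruct (Rle_dec x y); lra. }
  destruct (MVT_gen f x y (fun _ => 0)) as [c [_ Hc]].
  - intros t Ht. apply Hd, Hin. lra.
  - intros t Ht. apply continuity_pt_filterlim, (ex_derive_continuous f).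
    exists 0. now apply Hd, Hin.
  - lra.
Qed.

Lemma filterlim_at_right_0_squeeze (g : R -> R) d : 0 < d ->
  (forall t, 0 < t < d -> 0 < g t <= t) -> filterlim g (at_right 0) (at_right 0).
Proof.
  intros Hd Hg P [eps HP].
  apply (at_right_of_forall _ _ (Rmin d eps)); [apply Rmin_pos; [exact Hd | apply cond_pos] |].
  intros t Ht. pose proof (Rmin_l d eps). pose proof (Rmin_r d eps).
  specialize (Hg t ltac:(lra)). apply HP; [| lra].
  change (Rabs (g t - 0) < eps). rewrite Rminus_0_r, Rabs_pos_eq; lra.
Qed.

Lemma is_derive_0_at_right_lim (f : R -> R) a b l : a < b ->
  (forall t, a < t < b -> is_derive f t 0) -> filterlim f (at_right a) (locally l) ->
  forall x, a < x < b -> f x = l.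
Proof.
  intros Hab Hd Hl x Hx.
  apply (@filterlim_locally_unique _ _ R_NormedModule _
    (Proper_StrongProper _ (at_right_proper_filter a)) f); [| exact Hl].
  apply (filterlim_ext_loc (fun _ => f x)); [| apply filterlim_const].
  apply (at_right_of_forall _ _ (b - a)); [lra |].
  intros t Ht. apply (eq_of_is_derive_0 f a b); [exact Hd | exact Hx | lra].
Qed.

(** * The dilogarithm as a power series *)

Lemma Rabs_inv_le_1 x : 1 <= x -> Rabs (/ x) <= 1.
Proof.
  intros Hx. rewrite Rabs_pos_eq by (apply Rlt_le, Rinv_0_lt_compat; lra).
  rewrite <- Rinv_1. apply Rinv_le_contravar; lra.
Qed.

Lemma INR_S_ge_1 n : 1 <= INR (S n).
Proof. apply (le_INR 1); lia. Qed.

Lemma CV_radius_gt_Rabs (a : nat -> R) x :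
  (forall n, Rabs (a n) <= 1) -> Rabs x < 1 -> Rbar_lt (Rabs x) (CV_radius a).
Proof.
  intros Ha Hx. apply Rbar_lt_le_trans with 1; [exact Hx |].
  apply (proj1 (CV_radius_bounded a)). exists 1. intros n.
  rewrite pow1, Rmult_1_r. apply Ha.
Qed.

Definition Li2_coef : nat -> R := PS_incr_1 (fun n => / INR (S n) ^ 2).
Definition log_coef : nat -> R := PS_incr_1 (fun n => / INR (S n)).

Lemma Li2_PSeries x : Li2 x = PSeries Li2_coef x.
Proof.
  unfold Li2_coef. rewrite PSeries_incr_1. unfold Li2, PSeries.
  rewrite <- Series_scal_l. apply Series_ext. intros n. simpl. unfold Rdiv. ring.
Qed.

Lemma CV_Li2_coef x : Rabs x < 1 -> Rbar_lt (Rabs x) (CV_radius Li2_coef).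
Proof.
  intros Hx. unfold Li2_coef. rewrite CV_radius_incr_1. apply CV_radius_gt_Rabs; [|exact Hx].
  intros n. apply Rabs_inv_le_1, pow_R1_Rle, INR_S_ge_1.
Qed.

Lemma CV_log_coef x : Rabs x < 1 -> Rbar_lt (Rabs x) (CV_radius log_coef).
Proof.
  intros Hx. unfold log_coef. rewrite CV_radius_incr_1. apply CV_radius_gt_Rabs; [|exact Hx].
  intros n. apply Rabs_inv_le_1, INR_S_ge_1.
Qed.

Lemma PS_derive_Li2_coef n : PS_derive Li2_coef n = / INR (S n).
Proof. unfold PS_derive, Li2_coef, PS_incr_1. pose proof (INR_S_ge_1 n). field. lra. Qed.

Lemma PS_derive_log_coef n : PS_derive log_coef n = 1.
Proof. unfold PS_derive, log_coef, PS_incr_1. pose proof (INR_S_ge_1 n). field. lra. Qed.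

Lemma PSeries_log_coef x : Rabs x < 1 -> PSeries log_coef x = - ln (1 - x).
Proof.
  intros Hx. apply Rabs_def2 in Hx.
  assert (Hd : forall t, -1 < t < 1 -> is_derive (fun t => PSeries log_coef t + ln (1 - t)) t 0).
  { intros t Ht. assert (Ht' : Rabs t < 1) by (apply Rabs_def1; lra).
    replace 0 with (PSeries (PS_derive log_coef) t + - / (1 - t)).
    - apply (is_derive_plus (PSeries log_coef)).
      + now apply is_derive_PSeries, CV_log_coef.
      + auto_derive; [lra | field; lra].
    - rewrite (PSeries_ext _ _ _ PS_derive_log_coef).
      unfold PSeries. rewrite (Series_ext _ (fun n => t ^ n)) by (intros; ring).
      rewrite (is_series_unique _ _ (is_series_geom t Ht')). field. lra. }
  assert (E := eq_of_is_derive_0 _ (-1) 1 x 0 Hd).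
  specialize (E ltac:(lra) ltac:(lra)). cbv beta in E.
  rewrite PSeries_0, Rminus_0_r, ln_1 in E. change (log_coef 0) with 0 in E. lra.
Qed.

Lemma is_derive_Li2 x : 0 < x < 1 -> is_derive Li2 x (- ln (1 - x) / x).
Proof.
  intros Hx. assert (Hx' : Rabs x < 1) by (rewrite Rabs_pos_eq; lra).
  apply (is_derive_ext (PSeries Li2_coef)); [intros t; now rewrite Li2_PSeries |].
  replace (- ln (1 - x) / x) with (PSeries (PS_derive Li2_coef) x).
  - now apply is_derive_PSeries, CV_Li2_coef.
  - rewrite <- PSeries_log_coef, (PSeries_ext _ _ _ PS_derive_Li2_coef) by exact Hx'.
    unfold log_coef. rewrite PSeries_incr_1. field. lra.
Qed.

Lemma Li2_at_right_0 : filterlim Li2 (at_right 0) (locally 0).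
Proof.
  replace 0 with (Li2 0) at 2 by (now rewrite Li2_PSeries, PSeries_0).
  apply filterlim_at_right_continuous, (ex_derive_continuous Li2).
  apply (ex_derive_ext (PSeries Li2_coef)); [intros t; now rewrite Li2_PSeries |].
  apply ex_derive_PSeries, CV_Li2_coef. rewrite Rabs_R0. lra.
Qed.

(** * The Basel problem, after Matsuoka *)

Lemma ex_RInt_of_ex_derive (f : R -> R) a b : (forall x, ex_derive f x) -> ex_RInt f a b.
Proof.
  intros Hf. apply (@ex_RInt_continuous R_CompleteNormedModule).
  intros x _. exact (ex_derive_continuous f x (Hf x)).
Qed.

Lemma RInt_of_is_derive (F f : R -> R) a b :
  (forall x, is_derive F x (f x)) -> (forall x, ex_derive f x) -> RInt f a b = F b - F a.
Proof.
  intros HF Hf. apply (@is_RInt_unique R_CompleteNormedModule).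
  apply (@is_RInt_derive R_CompleteNormedModule); [intros x _; apply HF |].
  intros x _. exact (ex_derive_continuous f x (Hf x)).
Qed.

Lemma RInt_lin (f g : R -> R) a b c d : ex_RInt f a b -> ex_RInt g a b ->
  RInt (fun x => c * f x + d * g x) a b = c * RInt f a b + d * RInt g a b.
Proof.
  intros Hf Hg. apply (@is_RInt_unique R_CompleteNormedModule).
  apply (@is_RInt_plus R_NormedModule (fun x => c * f x) (fun x => d * g x));
    apply (@is_RInt_scal R_NormedModule); now apply (@RInt_correct R_CompleteNormedModule).
Qed.

Lemma RInt_lin3 (f g h : R -> R) a b c d e :
  ex_RInt f a b -> ex_RInt g a b -> ex_RInt h a b ->
  RInt (fun x => c * f x + d * g x + e * h x) a b
  = c * RInt f a b + d * RInt g a b + e * RInt h a b.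
Proof.
  intros Hf Hg Hh. apply (@is_RInt_unique R_CompleteNormedModule).
  apply (@is_RInt_plus R_NormedModule (fun x => c * f x + d * g x) (fun x => e * h x)).
  - apply (@is_RInt_plus R_NormedModule (fun x => c * f x) (fun x => d * g x));
      apply (@is_RInt_scal R_NormedModule); now apply (@RInt_correct R_CompleteNormedModule).
  - apply (@is_RInt_scal R_NormedModule); now apply (@RInt_correct R_CompleteNormedModule).
Qed.

Definition Wallis (k : nat) : R := RInt (fun x => cos x ^ k) 0 (PI / 2).
Definition Wallis2 (k : nat) : R := RInt (fun x => x ^ 2 * cos x ^ k) 0 (PI / 2).

Lemma ex_RInt_cos_pow k : ex_RInt (fun x => cos x ^ k) 0 (PI / 2).
Proof. apply ex_RInt_of_ex_derive; intros x; auto_derive; easy. Qed.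

Lemma ex_RInt_sq_cos_pow k : ex_RInt (fun x => x ^ 2 * cos x ^ k) 0 (PI / 2).
Proof. apply ex_RInt_of_ex_derive; intros x; auto_derive; easy. Qed.

Lemma eq_modulo_sin2_cos2 a b k x : a - b = k * (sin x ^ 2 + cos x ^ 2 - 1) -> a = b.
Proof.
  intros E. apply Rminus_diag_uniq. rewrite E.
  pose proof (sin2_cos2 x) as H. unfold Rsqr in H.
  replace (sin x ^ 2 + cos x ^ 2 - 1) with 0 by (simpl; lra). ring.
Qed.

Lemma is_derive_sin_cos_pow k x :
  is_derive (fun x => sin x * cos x ^ (k + 1)) x
    (INR (k + 2) * cos x ^ (k + 2) + - INR (k + 1) * cos x ^ k).
Proof.
  auto_derive; [easy |].
  replace (Init.Nat.pred (k + 1)) with k by lia.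
  rewrite !plus_INR, !pow_add.
  apply (eq_modulo_sin2_cos2 _ _ (- (INR k + 1) * cos x ^ k) x). simpl. ring.
Qed.

Lemma is_derive_Wallis2_primitive k x :
  is_derive (fun x => x * cos x ^ (k + 2) + INR (k + 2) / 2 * x ^ 2 * sin x * cos x ^ (k + 1)) x
    (1 * cos x ^ (k + 2) + INR (k + 2) ^ 2 / 2 * (x ^ 2 * cos x ^ (k + 2))
     + - (INR (k + 2) * INR (k + 1) / 2) * (x ^ 2 * cos x ^ k)).
Proof.
  auto_derive; [easy |].
  replace (Init.Nat.pred (k + 1)) with k by lia.
  replace (Init.Nat.pred (k + 2)) with (k + 1)%nat by lia.
  rewrite !plus_INR, !pow_add.
  apply (eq_modulo_sin2_cos2 _ _ (- (INR k + 2) * (INR k + 1) / 2 * x ^ 2 * cos x ^ k) x).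
  simpl INR. field.
Qed.

Lemma Wallis_rec k : INR (k + 2) * Wallis (k + 2) = INR (k + 1) * Wallis k.
Proof.
  assert (E := RInt_of_is_derive _ _ 0 (PI / 2) (is_derive_sin_cos_pow k)
    ltac:(intros; auto_derive; easy)).
  rewrite RInt_lin in E by apply ex_RInt_cos_pow.
  rewrite cos_PI2, sin_0, pow_ne_zero in E by lia.
  unfold Wallis. lra.
Qed.

Lemma Wallis2_rec k :
  2 * Wallis (k + 2) + INR (k + 2) ^ 2 * Wallis2 (k + 2) = INR (k + 2) * INR (k + 1) * Wallis2 k.
Proof.
  assert (E := RInt_of_is_derive _ _ 0 (PI / 2) (is_derive_Wallis2_primitive k)
    ltac:(intros; auto_derive; easy)).
  rewrite RInt_lin3 in E; [| apply ex_RInt_cos_pow | apply ex_RInt_sq_cos_pow ..].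
  rewrite cos_PI2, !pow_ne_zero in E by lia. unfold Wallis, Wallis2. lra.
Qed.

Lemma x_le_3_sin x : 0 <= x <= PI / 2 -> x <= 3 * sin x.
Proof.
  intros Hx. pose proof PI_4. pose proof PI_RGT_0.
  destruct (sin_bound x 0 ltac:(lra) ltac:(lra)) as [Hs _].
  replace (sin_approx x (2 * 0 + 1)) with (x - x ^ 3 / 6) in Hs
    by (unfold sin_approx, sin_term; simpl; field).
  assert (x ^ 2 <= 4) by nra. nra.
Qed.

Lemma Wallis2_nonneg k : 0 <= Wallis2 (2 * k).
Proof.
  apply RInt_ge_0; [pose proof PI_RGT_0; lra | apply ex_RInt_sq_cos_pow |].
  intros x _. rewrite pow_mult. apply Rmult_le_pos; [| apply pow_le]; apply pow2_ge_0.
Qed.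

Lemma Wallis2_le k : Wallis2 k <= 9 * (Wallis k - Wallis (k + 2)).
Proof.
  pose proof PI_RGT_0. replace (9 * (Wallis k - Wallis (k + 2)))
    with (9 * Wallis k + - 9 * Wallis (k + 2)) by ring.
  unfold Wallis, Wallis2.
  rewrite <- RInt_lin by apply ex_RInt_cos_pow.
  apply RInt_le;
    [lra | apply ex_RInt_sq_cos_pow | apply ex_RInt_of_ex_derive; intros; auto_derive; easy |].
  intros x Hx. pose proof (x_le_3_sin x ltac:(lra)) as Hs.
  assert (Hc : 0 <= cos x) by (apply cos_ge_0; lra).
  assert (Hk : 0 <= cos x ^ k) by (apply pow_le, Hc).
  replace (9 * cos x ^ k + - 9 * cos x ^ (k + 2)) with (cos x ^ k * (9 * sin x ^ 2))
    by (apply (eq_modulo_sin2_cos2 _ _ (9 * cos x ^ k) x); rewrite pow_add; ring).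
  rewrite (Rmult_comm (cos x ^ k)). apply Rmult_le_compat_r; [exact Hk | nra].
Qed.

Lemma Wallis_0 : Wallis 0 = PI / 2.
Proof.
  unfold Wallis. rewrite (RInt_of_is_derive (fun x => x) (fun x => cos x ^ 0)); [lra | |];
    intros x; auto_derive; easy || (simpl; ring).
Qed.

Lemma Wallis2_0 : Wallis2 0 = PI ^ 3 / 24.
Proof.
  unfold Wallis2. rewrite (RInt_of_is_derive (fun x => x ^ 3 / 3) (fun x => x ^ 2 * cos x ^ 0));
    [field | |]; intros x; auto_derive; easy || (simpl; field).
Qed.

Lemma Wallis_even_pos n : 0 < Wallis (2 * n).
Proof.
  induction n as [| n IH].
  - change (2 * 0)%nat with 0%nat. rewrite Wallis_0. pose proof PI_RGT_0. lra.
  - pose proof (Wallis_rec (2 * n)) as E.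
    replace (2 * S n)%nat with (2 * n + 2)%nat by lia.
    rewrite !plus_INR in E. change (INR 2) with (1 + 1) in E. change (INR 1) with 1 in E.
    pose proof (pos_INR (2 * n)). nra.
Qed.

Definition basel_remainder (n : nat) : R := 2 * Wallis2 (2 * n) / Wallis (2 * n).

Lemma basel_remainder_0 : basel_remainder 0 = PI ^ 2 / 6.
Proof.
  unfold basel_remainder. simpl (2 * 0)%nat. rewrite Wallis_0, Wallis2_0.
  field. pose proof PI_RGT_0. lra.
Qed.

Lemma Wallis_ratio_step a W0 W1 V0 V1 : 0 <= a -> 0 < W0 -> 0 < W1 ->
  (2 * a + 2) * W1 = (2 * a + 1) * W0 ->
  2 * W1 + (2 * a + 2) ^ 2 * V1 = (2 * a + 2) * (2 * a + 1) * V0 ->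
  2 * V0 / W0 - 2 * V1 / W1 = / (a + 1) ^ 2.
Proof.
  intros Ha H0 H1 EW EV.
  assert (E0 : W0 = (2 * a + 2) * W1 / (2 * a + 1)).
  { apply (Rmult_eq_reg_l (2 * a + 1)); [| lra].
    replace ((2 * a + 1) * ((2 * a + 2) * W1 / (2 * a + 1))) with ((2 * a + 2) * W1)
      by (field; lra). lra. }
  assert (E1 : V1 = ((2 * a + 2) * (2 * a + 1) * V0 - 2 * W1) / (2 * a + 2) ^ 2).
  { apply (Rmult_eq_reg_l ((2 * a + 2) ^ 2)); [| nra].
    replace ((2 * a + 2) ^ 2 * (((2 * a + 2) * (2 * a + 1) * V0 - 2 * W1) / (2 * a + 2) ^ 2))
      with ((2 * a + 2) * (2 * a + 1) * V0 - 2 * W1) by (field; lra). lra. }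
  subst W0 V1. field. lra.
Qed.

Lemma basel_remainder_step n : basel_remainder n - basel_remainder (S n) = / INR (S n) ^ 2.
Proof.
  unfold basel_remainder. replace (2 * S n)%nat with (2 * n + 2)%nat by lia.
  pose proof (Wallis_rec (2 * n)) as EW. pose proof (Wallis2_rec (2 * n)) as EV.
  rewrite !plus_INR, mult_INR in EW, EV. rewrite S_INR.
  change (INR 2) with 2 in EW, EV. change (INR 1) with 1 in EW, EV.
  apply Wallis_ratio_step; auto using pos_INR, Wallis_even_pos.
  replace (2 * n + 2)%nat with (2 * S n)%nat by lia. apply Wallis_even_pos.
Qed.

Lemma basel_remainder_bounds n : 0 <= basel_remainder n <= 9 / INR (S n).
Proof.
  unfold basel_remainder.
  pose proof (Wallis_even_pos n) as HW. pose proof (Wallis2_nonneg n) as HV.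
  pose proof (Wallis2_le (2 * n)) as Hle. pose proof (Wallis_rec (2 * n)) as EW.
  rewrite !plus_INR, mult_INR in EW. rewrite S_INR.
  change (INR 2) with 2 in EW. change (INR 1) with 1 in EW.
  pose proof (pos_INR n).
  split; [apply Rmult_le_pos; [lra | apply Rlt_le, Rinv_0_lt_compat, HW] |].
  assert (Hdiff : Wallis (2 * n) - Wallis (2 * n + 2) = Wallis (2 * n) / (2 * INR n + 2)).
  { apply (Rmult_eq_reg_l (2 * INR n + 2)); [| lra].
    replace ((2 * INR n + 2) * (Wallis (2 * n) / (2 * INR n + 2))) with (Wallis (2 * n))
      by (field; lra).
    lra. }
  rewrite Hdiff in Hle. apply Rle_div_l; [exact HW |].
  replace (9 / (INR n + 1) * Wallis (2 * n)) with (2 * (9 * (Wallis (2 * n) / (2 * INR n + 2))))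
    by (field; lra).
  lra.
Qed.

Lemma sum_inv_sq n :
  sum_f_R0 (fun k => / INR (S k) ^ 2) n = PI ^ 2 / 6 - basel_remainder (S n).
Proof.
  induction n as [| n IH].
  - change (sum_f_R0 _ 0) with (/ INR 1 ^ 2).
    rewrite <- basel_remainder_0, <- (basel_remainder_step 0). ring.
  - rewrite tech5, IH, <- (basel_remainder_step (S n)). ring.
Qed.

Lemma basel_remainder_lim : is_lim_seq (fun n => basel_remainder (S n)) 0.
Proof.
  apply (is_lim_seq_le_le (fun _ => 0) _ (fun n => 9 * / INR (S (S n))));
    [intros n; apply basel_remainder_bounds | apply is_lim_seq_const |].
  replace (Finite 0) with (Rbar_mult 9 (Rbar_inv p_infty)) by (simpl; f_equal; ring).
  apply is_lim_seq_scal_l, is_lim_seq_inv; [| discriminate].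
  apply (is_lim_seq_incr_1 (fun n => INR (S n))), (is_lim_seq_incr_1 INR), is_lim_seq_INR.
Qed.

Theorem Basel : is_series (fun n => / INR (S n) ^ 2) (PI ^ 2 / 6).
Proof.
  change (is_lim_seq (sum_n (fun n => / INR (S n) ^ 2)) (PI ^ 2 / 6)).
  apply (is_lim_seq_ext (fun n => PI ^ 2 / 6 - basel_remainder (S n)));
    [intros n; now rewrite sum_n_Reals, sum_inv_sq |].
  pose proof (is_lim_seq_minus' _ _ _ _ (is_lim_seq_const (PI ^ 2 / 6)) basel_remainder_lim) as L.
  now rewrite Rminus_0_r in L.
Qed.

(** * The dilogarithm on [0, 1] *)

Lemma Li2_term_bounds t n : 0 <= t <= 1 -> 0 <= t ^ S n / INR (S n) ^ 2 <= / INR (S n) ^ 2.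
Proof.
  intros Ht. pose proof (INR_S_ge_1 n).
  assert (0 < / INR (S n) ^ 2) by (apply Rinv_0_lt_compat, pow_lt; lra).
  assert (0 <= t ^ S n <= 1)
    by (split; [apply pow_le | rewrite <- (pow1 (S n)); apply pow_incr]; lra).
  unfold Rdiv. split; [apply Rmult_le_pos |]; nra.
Qed.

Lemma ex_series_Li2 t : 0 <= t <= 1 -> ex_series (fun n => t ^ S n / INR (S n) ^ 2).
Proof.
  intros Ht. apply (@ex_series_le R_AbsRing R_CompleteNormedModule _ (fun n => / INR (S n) ^ 2)).
  - intros n. change norm with Rabs. pose proof (Li2_term_bounds t n Ht).
    rewrite Rabs_pos_eq; lra.
  - exists (PI ^ 2 / 6). apply Basel.
Qed.

Lemma Li2_1 : Li2 1 = zeta2.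
Proof.
  unfold Li2, zeta2. rewrite (Series_ext _ (fun n => / INR (S n) ^ 2)).
  - apply is_series_unique, Basel.
  - intros n. rewrite pow1. unfold Rdiv. ring.
Qed.

Lemma Li2_le_Li2_1 t : 0 <= t <= 1 -> Li2 t <= Li2 1.
Proof.
  intros Ht. apply Series_le; [| now apply ex_series_Li2; lra].
  intros n. rewrite pow1. pose proof (Li2_term_bounds t n Ht). unfold Rdiv. lra.
Qed.

Lemma sum_n_le_Li2 t N : 0 <= t <= 1 -> sum_n (fun n => t ^ S n / INR (S n) ^ 2) N <= Li2 t.
Proof.
  intros Ht. apply is_lim_seq_incr_compare; [apply (Series_correct _ (ex_series_Li2 t Ht)) |].
  intros n. rewrite sum_Sn. pose proof (Li2_term_bounds t (S n) Ht). change plus with Rplus. lra.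
Qed.

Lemma one_sub_pow_le s n : 0 <= s <= 1 -> 1 - s ^ n <= INR n * (1 - s).
Proof.
  intros Hs. induction n as [| n IH]; [simpl; lra |].
  rewrite S_INR. simpl pow.
  assert (0 <= s ^ n <= 1) by (split; [apply pow_le | rewrite <- (pow1 n); apply pow_incr]; lra).
  nra.
Qed.

Lemma Li2_partial_sum_sub_le s N : 0 <= s <= 1 ->
  sum_n (fun n => 1 ^ S n / INR (S n) ^ 2) N - sum_n (fun n => s ^ S n / INR (S n) ^ 2) N
  <= INR (S N) * (1 - s).
Proof.
  intros Hs.
  assert (Hterm : forall k, 1 ^ S k / INR (S k) ^ 2 - s ^ S k / INR (S k) ^ 2 <= 1 - s).
  { intros k. pose proof (one_sub_pow_le s (S k) Hs). pose proof (INR_S_ge_1 k).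
    rewrite pow1. unfold Rdiv. rewrite <- Rmult_minus_distr_r.
    apply Rle_trans with (INR (S k) * (1 - s) * / INR (S k) ^ 2).
    - apply Rmult_le_compat_r; [apply Rlt_le, Rinv_0_lt_compat, pow_lt |]; lra.
    - replace (INR (S k) * (1 - s) * / INR (S k) ^ 2) with ((1 - s) / INR (S k)) by (field; lra).
      apply Rle_div_l; nra. }
  rewrite !sum_n_Reals. induction N as [| N IH].
  - change (INR 1) with 1. rewrite Rmult_1_l. exact (Hterm 0%nat).
  - rewrite !tech5. specialize (Hterm (S N)).
    replace (INR (S (S N)) * (1 - s)) with (INR (S N) * (1 - s) + (1 - s))
      by (rewrite (S_INR (S N)); ring).
    lra.
Qed.

Lemma Li2_at_left_1 : filterlim (fun t => Li2 (1 - t)) (at_right 0) (locally (Li2 1)).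
Proof.
  apply filterlim_locally. intros eps.
  assert (Hlim := Series_correct _ (ex_series_Li2 1 ltac:(lra))).
  destruct (proj1 (filterlim_locally _ _) Hlim (pos_div_2 eps)) as [N HN].
  specialize (HN N (le_n N)).
  change (Rabs (sum_n (fun n => 1 ^ S n / INR (S n) ^ 2) N - Li2 1) < eps / 2) in HN.
  pose proof (INR_S_ge_1 N). pose proof (cond_pos eps).
  set (d := eps / 2 / INR (S N)).
  assert (Hd : 0 < d) by (apply Rdiv_lt_0_compat; lra).
  apply (at_right_of_forall _ _ (Rmin 1 d)); [now apply Rmin_pos; lra |].
  intros t Ht. change (Rabs (Li2 (1 - t) - Li2 1) < eps).
  pose proof (Rmin_l 1 d). pose proof (Rmin_r 1 d).
  assert (HtN : INR (S N) * t < eps / 2).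
  { replace (eps / 2) with (INR (S N) * d) by (unfold d; field; lra).
    apply Rmult_lt_compat_l; lra. }
  pose proof (Li2_le_Li2_1 (1 - t) ltac:(lra)).
  pose proof (sum_n_le_Li2 (1 - t) N ltac:(lra)).
  pose proof (Li2_partial_sum_sub_le (1 - t) N ltac:(lra)).
  apply Rabs_lt_between'. apply Rabs_lt_between' in HN. lra.
Qed.

Lemma ln_le_sub_1 x : 0 < x -> ln x <= x - 1.
Proof. intros Hx. pose proof (exp_ineq1_le (ln x)) as H. rewrite exp_ln in H by exact Hx. lra. Qed.

Lemma neg_ln_1m_bounds t : 0 <= t <= 1 / 2 -> 0 <= - ln (1 - t) <= 2 * t.
Proof.
  intros Ht. split.
  - pose proof (ln_le (1 - t) 1 ltac:(lra) ltac:(lra)). rewrite ln_1 in *. lra.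
  - pose proof (ln_le_sub_1 (/ (1 - t)) ltac:(apply Rinv_0_lt_compat; lra)) as H.
    rewrite ln_Rinv in H by lra.
    apply Rle_trans with (/ (1 - t) - 1); [exact H |].
    apply (Rmult_le_reg_r (1 - t)); [lra |].
    replace ((/ (1 - t) - 1) * (1 - t)) with t by (field; lra). nra.
Qed.

Lemma neg_ln_le_inv_sqrt t : 0 < t <= 1 -> 0 <= - ln t <= 2 / sqrt t.
Proof.
  intros Ht. pose proof (sqrt_lt_R0 t ltac:(lra)) as Hs.
  split; [pose proof (ln_le t 1 ltac:(lra) ltac:(lra)); rewrite ln_1 in *; lra |].
  pose proof (ln_le_sub_1 (/ sqrt t) ltac:(now apply Rinv_0_lt_compat)) as H.
  rewrite ln_Rinv in H by exact Hs.
  assert (E : ln t = 2 * ln (sqrt t)).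
  { rewrite <- (sqrt_sqrt t) at 1 by lra. rewrite ln_mult by exact Hs. ring. }
  rewrite E. unfold Rdiv. lra.
Qed.

Lemma ln_mul_ln_1m_bounds t : 0 < t <= 1 / 2 -> 0 <= ln t * ln (1 - t) <= 4 * sqrt t.
Proof.
  intros Ht. pose proof (neg_ln_1m_bounds t ltac:(lra)) as H1.
  pose proof (neg_ln_le_inv_sqrt t ltac:(lra)) as H2.
  pose proof (sqrt_lt_R0 t ltac:(lra)) as Hs.
  replace (ln t * ln (1 - t)) with ((- ln t) * (- ln (1 - t))) by ring.
  split; [now apply Rmult_le_pos |].
  apply Rle_trans with (2 / sqrt t * (2 * t)); [now apply Rmult_le_compat |].
  rewrite <- (sqrt_sqrt t) at 2 by lra. apply Req_le. field. lra.
Qed.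

Lemma ln_mul_ln_1m_at_right_0 : filterlim (fun t => ln t * ln (1 - t)) (at_right 0) (locally 0).
Proof.
  change (filterlim (fun t => ln t * ln (1 - t)) (at_right 0) (Rbar_locally 0)).
  apply (filterlim_le_le (fun _ => 0) _ (fun t => 4 * sqrt t)).
  - apply (at_right_of_forall _ _ (1 / 2)); [lra |]. intros t Ht. apply ln_mul_ln_1m_bounds. lra.
  - apply filterlim_const.
  - replace (Finite 0) with (Finite (4 * sqrt 0)) by (now rewrite sqrt_0, Rmult_0_r).
    apply filterlim_Rmult_l, (filterlim_at_right_continuous sqrt), continuous_sqrt.
Qed.

(** * The Rogers dilogarithm *)

Definition RogersL (x : R) : R := Li2 x + / 2 * (ln x * ln (1 - x)).

Lemma is_derive_eq (f : R -> R) (x l l' : R) : is_derive f x l -> l = l' -> is_derive f x l'.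
Proof. now intros H <-. Qed.

Lemma is_derive_RogersL x : 0 < x < 1 ->
  is_derive RogersL x (- / 2 * (ln (1 - x) / x + ln x / (1 - x))).
Proof.
  intros Hx. unfold RogersL.
  apply (is_derive_eq _ _ (- ln (1 - x) / x + / 2 * (ln (1 - x) / x - ln x / (1 - x)))).
  - apply (is_derive_plus Li2); [now apply is_derive_Li2 |].
    auto_derive; [lra |]. rewrite <- (Rminus_def 1 x). field. lra.
  - field. lra.
Qed.

Lemma Derive_RogersL x : 0 < x < 1 -> Derive RogersL x = - / 2 * (ln (1 - x) / x + ln x / (1 - x)).
Proof. intros Hx. now apply is_derive_unique, is_derive_RogersL. Qed.

Lemma ex_derive_RogersL x : 0 < x < 1 -> ex_derive RogersL x.
Proof. intros Hx. eexists. now apply is_derive_RogersL. Qed.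

Definition Abel_defect (y t : R) : R :=
  RogersL t + RogersL y - RogersL (t * y)
  - RogersL (t * (1 - y) / (1 - t * y)) - RogersL (y * (1 - t) / (1 - t * y)).

Lemma div_in_unit a b : 0 < a < b -> 0 < a / b < 1.
Proof.
  intros Hab. split; [apply Rdiv_lt_0_compat; lra |].
  apply Rlt_div_l; lra.
Qed.

Lemma is_derive_Abel_defect y t : 0 < y < 1 -> 0 < t < 1 -> is_derive (Abel_defect y) t 0.
Proof.
  intros Hy Ht.
  assert (Hty : 0 < t * y < 1) by nra.
  assert (Hu : 0 < t * (1 - y) / (1 - t * y) < 1) by (apply div_in_unit; nra).
  assert (Hv : 0 < y * (1 - t) / (1 - t * y) < 1) by (apply div_in_unit; nra).
  unfold Abel_defect. auto_derive; rewrite <- ?Rminus_def.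
  { repeat split; try apply ex_derive_RogersL; auto; lra. }
  rewrite !Derive_RogersL by assumption.
  change (t * (1 - y) * / (1 - t * y)) with (t * (1 - y) / (1 - t * y)).
  change (y * (1 - t) * / (1 - t * y)) with (y * (1 - t) / (1 - t * y)).
  replace (1 - t * (1 - y) / (1 - t * y)) with ((1 - t) / (1 - t * y)) by (field; lra).
  replace (1 - y * (1 - t) / (1 - t * y)) with ((1 - y) / (1 - t * y)) by (field; lra).
  rewrite !ln_div, !ln_mult by nra.
  field. nra.
Qed.

Lemma RogersL_at_right_0 : filterlim RogersL (at_right 0) (locally 0).
Proof.
  replace 0 with (0 + / 2 * 0) at 2 by ring.
  apply filterlim_Rplus; [exact Li2_at_right_0 |].
  apply filterlim_Rmult_l, ln_mul_ln_1m_at_right_0.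
Qed.

Lemma Abel_defect_at_right_0 y : 0 < y < 1 -> filterlim (Abel_defect y) (at_right 0) (locally 0).
Proof.
  intros Hy.
  assert (Lty : filterlim (fun t => RogersL (t * y)) (at_right 0) (locally 0)).
  { eapply filterlim_comp; [| exact RogersL_at_right_0].
    apply (filterlim_at_right_0_squeeze _ 1); [lra |]. intros t Ht. split; nra. }
  assert (Lu : filterlim (fun t => RogersL (t * (1 - y) / (1 - t * y))) (at_right 0) (locally 0)).
  { eapply filterlim_comp; [| exact RogersL_at_right_0].
    apply (filterlim_at_right_0_squeeze _ 1); [lra |]. intros t Ht.
    split; [apply Rdiv_lt_0_compat; nra |].
    assert (0 <= t * y * (1 - t)) by (apply Rmult_le_pos; nra).
    apply Rle_div_l; nra. }
  assert (Lv : filterlim (fun t => RogersL (y * (1 - t) / (1 - t * y))) (at_right 0)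
                 (locally (RogersL y))).
  { replace (RogersL y) with (RogersL (y * (1 - 0) / (1 - 0 * y))) by (f_equal; field; lra).
    apply (filterlim_at_right_continuous (fun t => RogersL (y * (1 - t) / (1 - t * y)))).
    apply (continuous_comp (fun t => y * (1 - t) / (1 - t * y))).
    - apply (ex_derive_continuous (fun t => y * (1 - t) / (1 - t * y))). auto_derive. lra.
    - replace (y * (1 - 0) / (1 - 0 * y)) with y by (field; lra).
      apply (ex_derive_continuous RogersL), ex_derive_RogersL, Hy. }
  pose proof (filterlim_Rminus _ _ _ _ (filterlim_Rminus _ _ _ _ (filterlim_Rminus _ _ _ _
    (filterlim_Rplus _ _ _ _ RogersL_at_right_0 (filterlim_const (RogersL y))) Lty) Lu) Lv) as L.
  replace (0 + RogersL y - 0 - 0 - RogersL y) with 0 in L by ring. exact L.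
Qed.

Theorem RogersL_five_term x y : 0 < x < 1 -> 0 < y < 1 ->
  RogersL x + RogersL y =
  RogersL (x * y) + RogersL (x * (1 - y) / (1 - x * y)) + RogersL (y * (1 - x) / (1 - x * y)).
Proof.
  intros Hx Hy.
  assert (H := is_derive_0_at_right_lim (Abel_defect y) 0 1 0 Rlt_0_1
    (fun t Ht => is_derive_Abel_defect y t Hy Ht) (Abel_defect_at_right_0 y Hy) x Hx).
  unfold Abel_defect in H. lra.
Qed.

Theorem RogersL_reflection x : 0 < x < 1 -> RogersL x + RogersL (1 - x) = Li2 1.
Proof.
  intros Hx.
  apply (is_derive_0_at_right_lim (fun t => RogersL t + RogersL (1 - t)) 0 1); [lra | | | exact Hx].
  - intros t Ht. auto_derive; rewrite <- ?Rminus_def.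
    { repeat split; try apply ex_derive_RogersL; lra. }
    rewrite !Derive_RogersL by lra. replace (1 - (1 - t)) with t by ring. field. lra.
  - assert (E : forall t, Li2 t + Li2 (1 - t) + ln t * ln (1 - t) = RogersL t + RogersL (1 - t)).
    { intros t. unfold RogersL. replace (1 - (1 - t)) with t by ring. field. }
    apply (filterlim_ext _ _ E).
    replace (Li2 1) with (0 + Li2 1 + 0) by ring.
    apply filterlim_Rplus; [apply filterlim_Rplus |].
    + exact Li2_at_right_0.
    + exact Li2_at_left_1.
    + exact ln_mul_ln_1m_at_right_0.
Qed.

Lemma RogersL_five_term_implicit x y z a b : 0 < x < 1 -> 0 < y < 1 ->
  z = x * y -> a * (1 - z) = x * (1 - y) -> b * (1 - z) = y * (1 - x) ->
  RogersL x + RogersL y = RogersL z + RogersL a + RogersL b.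
Proof.
  intros Hx Hy -> Ha Hb. assert (0 < 1 - x * y) by nra.
  replace a with (x * (1 - y) / (1 - x * y)) by (rewrite <- Ha; field; lra).
  replace b with (y * (1 - x) / (1 - x * y)) by (rewrite <- Hb; field; lra).
  now apply RogersL_five_term.
Qed.

(** * Exact arithmetic in Q(r2) *)

(* [QR a b c d] stands for a + b r + c r^2 + d r^3, where r is a root of
   X^4 - X^3 - 6 X^2 - X + 1. *)
Record Qr := QR { c0 : Q; c1 : Q; c2 : Q; c3 : Q }.

Definition qr_one : Qr := QR 1 0 0 0.
Definition qr_X : Qr := QR 0 1 0 0.

Definition qr_sub (x y : Qr) : Qr :=
  QR (c0 x - c0 y) (c1 x - c1 y) (c2 x - c2 y) (c3 x - c3 y).

(* Reduction by X^4 = X^3 + 6 X^2 + X - 1, X^5 = 7 X^3 + 7 X^2 - 1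
   and X^6 = 14 X^3 + 42 X^2 + 6 X - 7. *)
Definition qr_mul (x y : Qr) : Qr :=
  let '(QR a0 a1 a2 a3) := x in
  let '(QR b0 b1 b2 b3) := y in
  let d4 := (a1 * b3 + a2 * b2 + a3 * b1)%Q in
  let d5 := (a2 * b3 + a3 * b2)%Q in
  let d6 := (a3 * b3)%Q in
  QR (a0 * b0 - d4 - d5 - 7 * d6)
     (a0 * b1 + a1 * b0 + d4 + 6 * d6)
     (a0 * b2 + a1 * b1 + a2 * b0 + 6 * d4 + 7 * d5 + 42 * d6)
     (a0 * b3 + a1 * b2 + a2 * b1 + a3 * b0 + d4 + 7 * d5 + 14 * d6).

Definition qr_pow (x : Qr) (n : nat) : Qr := Nat.iter n (qr_mul x) qr_one.

Definition qr_eqb (x y : Qr) : bool :=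
  Qeq_bool (c0 x) (c0 y) && Qeq_bool (c1 x) (c1 y)
  && Qeq_bool (c2 x) (c2 y) && Qeq_bool (c3 x) (c3 y).

Definition Qltb (x y : Q) : bool := negb (Qle_bool y x).

Definition term_lower (c m M : Q) : Q := if Qle_bool 0 c then c * m else c * M.
Definition term_upper (c m M : Q) : Q := if Qle_bool 0 c then c * M else c * m.

Definition qr_lower (lo hi : Q) (x : Qr) : Q :=
  c0 x + term_lower (c1 x) lo hi + term_lower (c2 x) (lo * lo) (hi * hi)
  + term_lower (c3 x) (lo * lo * lo) (hi * hi * hi).

Definition qr_upper (lo hi : Q) (x : Qr) : Q :=
  c0 x + term_upper (c1 x) lo hi + term_upper (c2 x) (lo * lo) (hi * hi)
  + term_upper (c3 x) (lo * lo * lo) (hi * hi * hi).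

Definition qr_in_unit (lo hi : Q) (x : Qr) : bool :=
  Qltb 0 (qr_lower lo hi x) && Qltb (qr_upper lo hi x) 1.

Definition five_term_ok (lo hi : Q) (t : Qr * Qr * Qr * Qr * Qr) : bool :=
  let '(x, y, z, a, b) := t in
  qr_in_unit lo hi x && qr_in_unit lo hi y && qr_eqb z (qr_mul x y)
  && qr_eqb (qr_mul a (qr_sub qr_one z)) (qr_mul x (qr_sub qr_one y))
  && qr_eqb (qr_mul b (qr_sub qr_one z)) (qr_mul y (qr_sub qr_one x)).

Definition reflection_ok (lo hi : Q) (t : Qr * Qr) : bool :=
  let '(x, y) := t in qr_in_unit lo hi x && qr_eqb (qr_sub qr_one x) y.

Lemma Q2R_int (z : Z) : Q2R (z # 1) = IZR z.
Proof. unfold Q2R; simpl; field. Qed.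

Lemma Qltb_lt x y : Qltb x y = true -> Q2R x < Q2R y.
Proof.
  unfold Qltb; intros H; apply Qlt_Rlt, Qnot_le_lt; intros Hle.
  apply Qle_bool_iff in Hle; rewrite Hle in H; discriminate.
Qed.

Lemma Qle_bool_0_sign c : if Qle_bool 0 c then 0 <= Q2R c else Q2R c < 0.
Proof.
  rewrite <- (Q2R_int 0); destruct (Qle_bool 0 c) eqn:Hc.
  - now apply Qle_Rle, Qle_bool_iff.
  - apply Qlt_Rlt, Qnot_le_lt; intros H; apply Qle_bool_iff in H; congruence.
Qed.

Lemma term_bounds c m M s : Q2R m <= s <= Q2R M ->
  Q2R (term_lower c m M) <= Q2R c * s <= Q2R (term_upper c m M).
Proof.
  unfold term_lower, term_upper; intros Hs.
  pose proof (Qle_bool_0_sign c) as Hc.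
  destruct (Qle_bool 0 c); rewrite !Q2R_mult; split; nra.
Qed.

Section Evaluation.

Variable rho : R.

Definition qr_eval (x : Qr) : R :=
  Q2R (c0 x) + Q2R (c1 x) * rho + Q2R (c2 x) * rho ^ 2 + Q2R (c3 x) * rho ^ 3.

Lemma qr_eval_one : qr_eval qr_one = 1.
Proof. unfold qr_eval, Q2R; simpl; field. Qed.

Lemma qr_eval_X : qr_eval qr_X = rho.
Proof. unfold qr_eval, Q2R; simpl; field. Qed.

Lemma qr_eval_sub x y : qr_eval (qr_sub x y) = qr_eval x - qr_eval y.
Proof. destruct x, y; unfold qr_eval; simpl; rewrite !Q2R_minus; ring. Qed.

Lemma qr_eqb_eval x y : qr_eqb x y = true -> qr_eval x = qr_eval y.
Proof.
  destruct x, y; unfold qr_eqb, qr_eval; simpl.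
  intros H; repeat (apply andb_prop in H as [H ?Hc]).
  repeat match goal with Hc : Qeq_bool _ _ = true |- _ =>
    apply Qeq_bool_eq, Qeq_eqR in Hc; rewrite Hc; clear Hc end.
  reflexivity.
Qed.

Lemma qr_eval_bounds lo hi x : 0 <= Q2R lo -> Q2R lo <= rho <= Q2R hi ->
  Q2R (qr_lower lo hi x) <= qr_eval x <= Q2R (qr_upper lo hi x).
Proof.
  intros Hlo Hrho. unfold qr_lower, qr_upper, qr_eval. rewrite !Q2R_plus.
  assert (Hk : forall k, Q2R lo ^ k <= rho ^ k <= Q2R hi ^ k)
    by (intros k; split; apply pow_incr; lra).
  assert (H2 : Q2R (lo * lo) <= rho ^ 2 <= Q2R (hi * hi))
    by (rewrite !Q2R_mult; pose proof (Hk 2%nat); simpl in *; lra).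
  assert (H3 : Q2R (lo * lo * lo) <= rho ^ 3 <= Q2R (hi * hi * hi))
    by (rewrite !Q2R_mult; pose proof (Hk 3%nat); simpl in *; lra).
  pose proof (term_bounds (c1 x) _ _ _ Hrho).
  pose proof (term_bounds (c2 x) _ _ _ H2). pose proof (term_bounds (c3 x) _ _ _ H3).
  lra.
Qed.

Lemma qr_in_unit_eval lo hi x : 0 <= Q2R lo -> Q2R lo <= rho <= Q2R hi ->
  qr_in_unit lo hi x = true -> 0 < qr_eval x < 1.
Proof.
  intros Hlo Hrho H. apply andb_prop in H as [Hl Hu].
  apply Qltb_lt in Hl, Hu. rewrite <- (Q2R_int 0). rewrite <- (Q2R_int 1).
  pose proof (qr_eval_bounds lo hi x Hlo Hrho). lra.
Qed.

Hypothesis rho_root : rho ^ 4 - rho ^ 3 - 6 * rho ^ 2 - rho + 1 = 0.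

Lemma qr_eval_mul x y : qr_eval (qr_mul x y) = qr_eval x * qr_eval y.
Proof.
  destruct x as [a0 a1 a2 a3], y as [b0 b1 b2 b3]; unfold qr_eval; simpl.
  repeat (rewrite Q2R_plus || rewrite Q2R_minus || rewrite Q2R_mult).
  rewrite !Q2R_int. apply Rminus_diag_uniq.
  transitivity ((Q2R a1 * Q2R b3 + Q2R a2 * Q2R b2 + Q2R a3 * Q2R b1
    + (Q2R a2 * Q2R b3 + Q2R a3 * Q2R b2) * (rho + 1)
    + Q2R a3 * Q2R b3 * (rho ^ 2 + rho + 7)) * - (rho ^ 4 - rho ^ 3 - 6 * rho ^ 2 - rho + 1)).
  - ring.
  - rewrite rho_root. ring.
Qed.

Lemma qr_eval_pow x n : qr_eval (qr_pow x n) = qr_eval x ^ n.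
Proof.
  induction n as [| n IH]; [apply qr_eval_one |].
  simpl. rewrite qr_eval_mul. now f_equal.
Qed.

End Evaluation.

Section Certificates.

Variables (rho : R) (lo hi : Q).
Hypothesis rho_root : rho ^ 4 - rho ^ 3 - 6 * rho ^ 2 - rho + 1 = 0.
Hypothesis lo_nonneg : 0 <= Q2R lo.
Hypothesis rho_between : Q2R lo <= rho <= Q2R hi.

Let L (x : Qr) : R := RogersL (qr_eval rho x).

Lemma five_term_ok_sound t : five_term_ok lo hi t = true ->
  let '(x, y, z, a, b) := t in L x + L y = L z + L a + L b.
Proof.
  destruct t as [[[[x y] z] a] b]; unfold five_term_ok, L; cbv beta iota.
  intros H; apply andb_prop in H as [H Hb]; apply andb_prop in H as [H Ha].
  apply andb_prop in H as [H Hz]; apply andb_prop in H as [Hx Hy].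
  apply qr_eqb_eval with (rho := rho) in Hz, Ha, Hb.
  rewrite qr_eval_mul in Hz by exact rho_root.
  rewrite !qr_eval_mul, !qr_eval_sub, qr_eval_one in Ha, Hb by exact rho_root.
  apply RogersL_five_term_implicit; auto; eapply qr_in_unit_eval; eauto.
Qed.

Lemma reflection_ok_sound t : reflection_ok lo hi t = true ->
  let '(x, y) := t in L x + L y = Li2 1.
Proof.
  destruct t as [x y]; unfold reflection_ok, L; cbv beta iota.
  intros H; apply andb_prop in H as [Hx Hy].
  apply qr_eqb_eval with (rho := rho) in Hy. rewrite qr_eval_sub, qr_eval_one in Hy.
  rewrite <- Hy. apply RogersL_reflection. eapply qr_in_unit_eval; eauto.
Qed.

Lemma five_terms_sound ts : forallb (five_term_ok lo hi) ts = true ->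
  List.Forall (fun t => let '(x, y, z, a, b) := t in L x + L y = L z + L a + L b) ts.
Proof.
  intros H. apply List.Forall_forall. intros t Ht.
  apply five_term_ok_sound. exact (proj1 (forallb_forall _ _) H t Ht).
Qed.

Lemma reflections_sound ts : forallb (reflection_ok lo hi) ts = true ->
  List.Forall (fun t => let '(x, y) := t in L x + L y = Li2 1) ts.
Proof.
  intros H. apply List.Forall_forall. intros t Ht.
  apply reflection_ok_sound. exact (proj1 (forallb_forall _ _) H t Ht).
Qed.

End Certificates.

(** * The ladder *)

Lemma sqrt_between a b x : 0 <= a -> 0 <= b -> a * a < x < b * b -> a < sqrt x < b.
Proof.
  intros Ha Hb Hx. rewrite <- (sqrt_square a) at 1 by exact Ha.
  rewrite <- (sqrt_square b) by exact Hb.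
  split; apply sqrt_lt_1_alt; nra.
Qed.

Lemma r2_root : r2 ^ 4 - r2 ^ 3 - 6 * r2 ^ 2 - r2 + 1 = 0.
Proof.
  unfold r2. set (s := sqrt 33). set (t := sqrt (2 * (9 + s))).
  assert (Hs : s * s = 33) by (apply sqrt_sqrt; lra).
  assert (Hs0 : 0 <= s) by apply sqrt_pos.
  assert (Ht : t * t = 2 * (9 + s)) by (apply sqrt_sqrt; nra).
  (* r2 = (1 + u) / 4, and at (1 + u) / 4 the quartic times 256 is
     (u^2 + 15)^2 - 132 (u + 1)^2 *)
  set (u := s - t).
  assert (Hu : u * u + 15 = 2 * s * (u + 1)) by (unfold u; nra).
  replace (/ 4 * (1 + s - t)) with ((1 + u) / 4) by (unfold u; field).
  apply (Rmult_eq_reg_l 256); [| lra].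
  transitivity ((u * u + 15) ^ 2 - 4 * (s * s) * (u + 1) ^ 2).
  - rewrite Hs. field.
  - rewrite Hu. ring.
Qed.

Definition r2_lo : Q := 32854339778 # 100000000000.
Definition r2_hi : Q := 32854339779 # 100000000000.

Lemma r2_lo_nonneg : 0 <= Q2R r2_lo.
Proof. unfold r2_lo, Q2R; simpl; lra. Qed.

Lemma r2_between : Q2R r2_lo <= r2 <= Q2R r2_hi.
Proof.
  assert (Hs : 5744562646538 / 1000000000000 < sqrt 33 < 5744562646539 / 1000000000000)
    by (apply sqrt_between; lra).
  assert (Ht : 5430389055406 / 1000000000000 < sqrt (2 * (9 + sqrt 33))
               < 5430389055407 / 1000000000000)
    by (apply sqrt_between; lra).
  unfold r2, r2_lo, r2_hi, Q2R; simpl. lra.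
Qed.

Lemma qr_eval_r2_pow k x : qr_eqb x (qr_pow qr_X k) = true -> qr_eval r2 x = r2 ^ k.
Proof.
  intros H. rewrite (qr_eqb_eval r2 _ _ H), qr_eval_pow, qr_eval_X by exact r2_root.
  reflexivity.
Qed.

Definition five_term_instances : list (Qr * Qr * Qr * Qr * Qr) := [
   (QR 0 0 0 1, QR 0 0 0 1,
    QR (-7) 6 42 14, QR (-1#8) (3#8) (3#8) (-1#8), QR (-1#8) (3#8) (3#8) (-1#8));
   (QR (-1#4) 1 (1#2) (-1#4), QR (1#4) 0 (1#4) 0,
    QR (-1#8) (3#8) (3#8) (-1#8), QR 0 (1#2) (-1#2) (-1#2), QR 0 0 2 1);
   (QR (-1) (7#2) (1#2) (-1#2), QR 1 0 (-4) (-2),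
    QR 0 (1#2) (-1#2) (-1#2), QR (-1#2) 2 (-1#2) 0, QR (1#2) 0 (-1#2) 0);
   (QR (1#6) 0 0 (-1#6), QR (-1#6) (3#2) (1#2) (-1#3),
    QR (-1#12) (1#3) (1#3) (-1#12), QR 0 0 1 0, QR 0 1 0 0);
   (QR (-1#4) 1 (1#2) (-1#4), QR (1#3) (1#3) (1#3) 0,
    QR (-1#12) (1#3) (1#3) (-1#12), QR (-1#4) (3#4) (3#4) (-1#4), QR (1#2) 0 (-1#2) 0);
   (QR (-1#2) 2 (-1#2) 0, QR (1#2) (-1#3) (-1#3) (1#6),
    QR (-2#3) (5#3) (5#3) (-2#3), QR (-1#4) (3#4) (3#4) (-1#4), QR (1#2) (-1#2) 0 0);
   (QR (-2) 4 8 (-3), QR 1 0 (-4) (-2),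
    QR 0 0 0 1, QR (-2#3) (5#3) (5#3) (-2#3), QR (1#3) (1#3) (1#3) 0);
   (QR 2 (-4) (-5) 2, QR 0 1 0 0,
    QR (-2) 4 8 (-3), QR (3#4) (-7#4) (-1#4) (1#4), QR (1#4) 0 (1#4) 0);
   (QR (3#2) (-7#2) (-1#2) (1#2), QR (1#2) 0 0 0,
    QR (3#4) (-7#4) (-1#4) (1#4), QR (-1) (7#2) (1#2) (-1#2), QR 1 (-7#4) (-1#4) (1#4));
   (QR 0 (1#2) (1#2) 0, QR (-1) 4 2 (-1),
    QR 0 0 1 0, QR (-1#4) 1 (1#2) (-1#4), QR (-3#2) (11#2) (3#2) (-1));
   (QR (1#2) (-1#2) (-1#2) 0, QR (5#4) (-5#2) (-3#2) (3#4),
    QR (5#8) (-3#2) (-1#2) (1#8), QR 2 (-4) (-5) 2, QR 2 (-1) (-15) 5);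
   (QR (1#4) (-1#4) (1#4) 0, QR (3#2) (-3) (-1) (1#2),
    QR (5#8) (-3#2) (-1#2) (1#8), QR 1 (-3) 1 0, QR (-2) 7 1 (-1));
   (QR 0 (1#2) (-1#2) (-1#2), QR (-1#2) 2 1 (-1#2),
    QR (1#4) (-1#2) (-1#2) (-1#4), QR (-2) 4 8 (-3), QR 2 (-1) (-15) 5);
   (QR (-1#2) 2 1 (-1#2), QR (-1) 4 2 (-1),
    QR 1 (-3) 1 0, QR 1 (-5#2) (-1#2) (1#2), QR (3#2) (-3) (-1) (1#2));
   (QR 1 (-5#2) (-1#2) (1#2), QR (1#6) 0 0 (-1#6),
    QR (1#4) (-1#2) (-1#2) (-1#4), QR 1 (-3) 1 0, QR (1#3) 0 (-2) (2#3));
   (QR (5#4) (-5#2) (-3#2) (3#4), QR 1 (-3#2) (-1) (1#2),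
    QR 1 (-3) 1 0, QR (1#4) (-1#4) (1#4) 0, QR (1#2) (-1#2) 0 0);
   (QR 5 (-14) (-2) 2, QR (5#12) 0 0 (1#12),
    QR (9#4) (-6) (-2) (5#4), QR (-1) 3 2 (-1), QR (2#3) (-1) 0 (1#3));
   (QR (3#4) (-3#2) (-1#2) (1#4), QR 2 (-4) (-2) 1,
    QR (9#4) (-6) (-2) (5#4), QR (1#2) (-1) (-1#2) 0, QR (1#2) 0 (-1#2) 0);
   (QR (1#2) (-1#2) (-1#2) 0, QR 1 (-3#2) (-1) (1#2),
    QR (1#2) (-1) (-1#2) 0, QR (-1) (7#2) (1#2) (-1#2), QR 3 (-7) (-4) 2);
   (QR 0 1 (-1) 0, QR (5#12) 0 0 (1#12),
    QR 0 (1#2) (-1#2) (-1#2), QR (1#3) 0 (-2) (2#3), QR (1#2) (-1#3) (-1#3) (1#6));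
   (QR (-1#2) 2 1 (-1#2), QR 1 (-3#2) (-1) (1#2),
    QR (-1#2) 2 (-1#2) 0, QR (1#6) 0 0 (-1#6), QR (2#3) (-1) 0 (1#3));
   (QR 1 (-7#4) (-1#4) (1#4), QR (1#2) 0 0 0,
    QR (1#2) (-7#8) (-1#8) (1#8), QR 5 (-14) (-2) 2, QR (-2) 7 1 (-1));
   (QR (1#2) 0 (1#2) 0, QR (5#2) (-11#2) (-3#2) 1,
    QR (3#2) (-7#2) (-1#2) (1#2), QR (2#3) (-1) 0 (1#3), QR (-1#6) (3#2) (1#2) (-1#3));
   (QR (1#2) (-1#2) 0 0, QR (-1) 4 2 (-1),
    QR (-1) 3 2 (-1), QR (1#2) (-7#8) (-1#8) (1#8), QR (1#8) (3#4) (1#4) (-1#8));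
   (QR 0 1 0 0, QR (-3#2) (11#2) (3#2) (-1),
    QR 1 (-5#2) (-1#2) (1#2), QR 2 (-4) (-5) 2, QR 3 (-7) (-4) 2);
   (QR (-1#2) 2 1 (-1#2), QR (1#2) 0 0 0,
    QR (-1#4) 1 (1#2) (-1#4), QR (1#3) 0 (-2) (2#3), QR (1#3) 0 1 (-1#3));
   (QR 0 1 0 0, QR (1#3) 0 1 (-1#3),
    QR (1#3) 0 (-2) (2#3), QR 0 (1#2) (1#2) 0, QR (1#2) (-1#2) 0 0);
   (QR (3#4) (-3#2) (-1#2) (1#4), QR (1#4) (1#2) (1#2) (-1#4),
    QR (1#8) (-1#8) (1#8) 0, QR 1 (-2) (-2) 0, QR 0 1 1 (-1));
   (QR (1#3) (-7#12) (-1#12) (1#12), QR 0 1 1 0,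
    QR (-1#12) (1#3) (1#3) (-1#12), QR (1#2) (-1) (-1) (1#2), QR 0 1 1 (-1));
   (QR 1 (-2) (-1) 0, QR (1#4) (1#2) (1#2) (-1#4),
    QR 0 0 1 0, QR 1 (-5#2) (-1#2) (1#2), QR (1#8) (3#4) (1#4) (-1#8));
   (QR (7#6) (-2) (-2) (5#6), QR (5#12) 0 0 (1#12),
    QR (1#3) (-7#12) (-1#12) (1#12), QR 2 (-4) (-5) 2, QR 0 1 0 0);
   (QR 0 1 (-1) 0, QR (7#6) (-2) (-2) (5#6),
    QR (-2) 4 8 (-3), QR (1#6) 0 0 (-1#6), QR (2#3) (-7#6) (-1#6) (1#6));
   (QR (3#2) (-7#2) (-1#2) (1#2), QR 0 1 0 0,
    QR (-1#2) 2 (-1#2) 0, QR 1 (-2) (-1) 0, QR 0 0 2 1);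
   (QR (3#4) (-3#2) (-1#2) (1#4), QR 1 (-1) (-3) 1,
    QR (1#2) (-1) (-1) (1#2), QR 1 (-5#2) (-1#2) (1#2), QR 0 1 0 0);
   (QR 0 (1#2) (-1#2) (-1#2), QR 1 (-1) (-3) 1,
    QR 0 0 0 1, QR (-1#12) (1#3) (1#3) (-1#12), QR (1#2) (-1#3) (-1#3) (1#6));
   (QR 0 0 2 1, QR 2 (-4) (-2) 1,
    QR 1 (-2) (-2) 0, QR 1 (-5#2) (-1#2) (1#2), QR (-3#2) (11#2) (3#2) (-1));
   (QR (-1) (7#2) (1#2) (-1#2), QR (-1) 1 7 3,
    QR 0 0 0 1, QR (-11#12) 3 1 (-7#12), QR (1#6) 0 0 (-1#6));
   (QR (1#3) 0 (-2) (-4#3), QR (-1) 3 2 (-1),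
    QR (-1) 1 6 1, QR (-1#12) (1#3) (1#3) (-1#12), QR (-11#12) 3 1 (-7#12));
   (QR (1#6) 0 0 (-1#6), QR 0 1 1 0,
    QR (1#3) 0 (-2) (-4#3), QR (1#8) (-1#8) (1#8) 0, QR (1#8) (3#4) (1#4) (-1#8));
   (QR 2 (-1) (-10) (-5), QR (1#4) (1#2) (1#2) (-1#4),
    QR (-1) 1 7 3, QR (1#4) 0 (1#4) 0, QR (1#4) (1#4) 0 0);
   (QR 2 (-1) (-10) (-5), QR (5#2) (-11#2) (-3#2) 1,
    QR 1 (-2) (-1) 0, QR 1 (-2) (-1) 0, QR (-3#2) (11#2) (3#2) (-1));
   (QR (1#2) 0 0 0, QR 0 0 4 2,
    QR 0 0 2 1, QR (1#4) (1#4) 0 0, QR (1#2) (-1#2) 0 0);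
   (QR 3 (-7) (-4) 2, QR (1#2) (-1#3) (-1#3) (1#6),
    QR 1 (-3) 1 0, QR (-1#2) 2 1 (-1#2), QR (2#3) (-7#6) (-1#6) (1#6));
   (QR 0 0 2 1, QR (1#3) 0 1 (-1#3),
    QR 0 0 1 0, QR (1#6) 0 0 (-1#6), QR (1#2) (-1#3) (-1#3) (1#6));
   (QR (-2) 7 1 (-1), QR (1#2) 0 (-1#2) 0,
    QR (-1) 3 2 (-1), QR (-1#2) 2 1 (-1#2), QR (1#2) (-1#2) 0 0);
   (QR 1 0 (-4) (-2), QR 2 (-4) (-2) 1,
    QR 0 0 2 1, QR 0 1 0 0, QR 3 (-7) (-4) 2);
   (QR 2 (-4) (-5) 2, QR 1 0 (-4) (-2),
    QR 0 0 1 0, QR 1 (-3) 1 0, QR 0 1 1 0);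
   (QR (1#4) (-1#4) (1#4) 0, QR (1#2) 0 0 0,
    QR (1#8) (-1#8) (1#8) 0, QR 0 0 1 0, QR (1#2) 0 (-1#2) 0);
   (QR 0 1 0 0, QR 2 (-4) (-2) 1,
    QR (-1) 3 2 (-1), QR (1#4) (-1#4) (1#4) 0, QR 1 (-7#4) (-1#4) (1#4));
   (QR (-1) 4 2 (-1), QR (1#2) 0 0 0,
    QR (-1#2) 2 1 (-1#2), QR 0 1 0 0, QR (1#2) (-1#2) 0 0);
   (QR (-1#2) 2 1 (-1#2), QR (1#8) (3#4) (1#4) (-1#8),
    QR (1#8) (-1#8) (1#8) 0, QR (-1) 3 2 (-1), QR 0 1 0 0);
   (QR 0 0 1 0, QR 0 0 1 0,
    QR (-1) 1 6 1, QR (1#8) (-1#8) (1#8) 0, QR (1#8) (-1#8) (1#8) 0);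
   (QR 0 1 0 0, QR 0 1 0 0,
    QR 0 0 1 0, QR (-1#2) 2 1 (-1#2), QR (-1#2) 2 1 (-1#2));
   (QR (-1) 4 2 (-1), QR (1#2) (1#2) 0 0,
    QR 0 1 0 0, QR (-1#2) 2 1 (-1#2), QR (1#2) 0 0 0)].

Definition reflection_instances : list (Qr * Qr) := [
   (QR (1#2) 0 (-1#2) 0, QR (1#2) 0 (1#2) 0);
   (QR 1 0 (-4) (-2), QR 0 0 4 2);
   (QR (-1) 4 2 (-1), QR 2 (-4) (-2) 1);
   (QR (1#2) (-1#2) 0 0, QR (1#2) (1#2) 0 0)].

Lemma five_term_instances_ok : forallb (five_term_ok r2_lo r2_hi) five_term_instances = true.
Proof. vm_compute. reflexivity. Qed.

Lemma reflection_instances_ok : forallb (reflection_ok r2_lo r2_hi) reflection_instances = true.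
Proof. vm_compute. reflexivity. Qed.

Lemma r2_ladder_RogersL :
  24 * RogersL (qr_eval r2 (QR 0 1 0 0)) + 21 * RogersL (qr_eval r2 (QR 0 0 1 0))
  - 8 * RogersL (qr_eval r2 (QR 0 0 0 1)) - 3 * RogersL (qr_eval r2 (QR (-1) 1 6 1))
  + RogersL (qr_eval r2 (QR (-7) 6 42 14)) = 11 * Li2 1.
Proof.
  pose proof (five_terms_sound _ _ _ r2_root r2_lo_nonneg r2_between _ five_term_instances_ok)
    as H5.
  pose proof (reflections_sound _ _ _ r2_lo_nonneg r2_between _ reflection_instances_ok) as HR.
  unfold five_term_instances, reflection_instances in H5, HR.
  repeat match goal with
  | H : List.Forall _ (_ :: _) |- _ => apply List.Forall_cons_iff in H as [?H H]
  end.
  cbv beta iota zeta in *. lra.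
Qed.

Lemma r2_ladder_logs :
  24 * (ln r2 * ln (1 - r2)) + 21 * (ln (r2 ^ 2) * ln (1 - r2 ^ 2))
  - 8 * (ln (r2 ^ 3) * ln (1 - r2 ^ 3)) - 3 * (ln (r2 ^ 4) * ln (1 - r2 ^ 4))
  + ln (r2 ^ 6) * ln (1 - r2 ^ 6) = 12 * ln r2 ^ 2.
Proof.
  pose proof r2_root as P. pose proof r2_between as B. pose proof r2_lo_nonneg.
  unfold r2_lo, r2_hi, Q2R in B; simpl in B.
  assert (Hr : 0 < r2 < 1) by lra.
  assert (Hc : 0 < 1 + r2 + r2 ^ 2) by nra.
  assert (Hd : 0 < 1 - r2 + r2 ^ 2) by nra.
  assert (He : 0 < 1 + r2 ^ 2) by nra.
  assert (L2 : ln (1 - r2 ^ 2) = ln (1 - r2) + ln (1 + r2))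
    by (rewrite <- ln_mult by lra; f_equal; ring).
  assert (L3 : ln (1 - r2 ^ 3) = ln (1 - r2) + ln (1 + r2 + r2 ^ 2))
    by (rewrite <- ln_mult by lra; f_equal; ring).
  assert (L4 : ln (1 - r2 ^ 4) = ln (1 - r2) + ln (1 + r2) + ln (1 + r2 ^ 2))
    by (rewrite <- !ln_mult by nra; f_equal; ring).
  assert (L6 : ln (1 - r2 ^ 6)
               = ln (1 - r2) + ln (1 + r2) + ln (1 + r2 + r2 ^ 2) + ln (1 - r2 + r2 ^ 2))
    by (rewrite <- !ln_mult by nra; f_equal; ring).
  (* both products are identities modulo [r2_root] *)
  assert (HC : ln (1 + r2 + r2 ^ 2) + ln (1 + r2 ^ 2) = ln 2 + 2 * (ln (1 - r2) + ln (1 + r2))).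
  { rewrite <- ln_mult by lra.
    replace ((1 + r2 + r2 ^ 2) * (1 + r2 ^ 2)) with (2 * ((1 - r2) * (1 + r2)) ^ 2) by lra.
    rewrite ln_mult, ln_pow, ln_mult by nra. simpl INR. ring. }
  assert (HD : ln (1 - r2 + r2 ^ 2) + ln (1 + r2 ^ 2) = 3 * ln 2 + 2 * ln r2).
  { rewrite <- ln_mult by lra.
    replace ((1 - r2 + r2 ^ 2) * (1 + r2 ^ 2)) with (2 ^ 3 * r2 ^ 2) by lra.
    rewrite ln_mult, !ln_pow by nra. simpl INR. ring. }
  rewrite !ln_pow by lra. rewrite L2, L3, L4, L6.
  replace (ln (1 + r2 + r2 ^ 2)) with (ln 2 + 2 * (ln (1 - r2) + ln (1 + r2)) - ln (1 + r2 ^ 2))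
    by lra.
  replace (ln (1 - r2 + r2 ^ 2)) with (3 * ln 2 + 2 * ln r2 - ln (1 + r2 ^ 2)) by lra.
  simpl INR. ring.
Qed.

Theorem mainTheorem4 :
  Li2 (r2 ^ 6) - 3 * Li2 (r2 ^ 4) - 8 * Li2 (r2 ^ 3) + 21 * Li2 (r2 ^ 2)
  + 24 * Li2 r2 - 11 * zeta2 = - 6 * (ln r2) ^ 2.
Proof.
  pose proof r2_ladder_RogersL as HL.
  rewrite (qr_eval_r2_pow 1 (QR 0 1 0 0)), (qr_eval_r2_pow 2 (QR 0 0 1 0)),
    (qr_eval_r2_pow 3 (QR 0 0 0 1)), (qr_eval_r2_pow 4 (QR (-1) 1 6 1)),
    (qr_eval_r2_pow 6 (QR (-7) 6 42 14)), pow_1 in HL by reflexivity.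
  unfold RogersL in HL. rewrite Li2_1 in HL.
  pose proof r2_ladder_logs. lra.
Qed.
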